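(* $\mathfrak{icp}(\mathsf{null}\setminus\{\emptyset\},\subseteq)=\operatorname{add}(\mathsf{null})$.
   Context: $\mathsf{null}$ is the ideal of Lebesgue measure zero subsets of $2^\omega$, here ordered by inclusion. For a poset $(P,\le)$, $F\subseteq P$ is an incomparable family if for every $p\in P$ there is $q\in F$ with $p\not\le q$ and $q\not\le p$; $\mathfrak{icp}(P)$ is the minimal size of an incomparable family. $\operatorname{add}(\mathsf{null})$ is the minimal size of a family of null sets whose union is not null. *)

From mathcomp Require Import all_boot all_order all_algebra.
From mathcomp Require Import boolp classical_sets cardinality.
Set Implicit Arguments. Unset Strict Implicit. Unset Printing Implicit Defensive.
Import GRing.Theory Num.Theory.

Definition cantor := nat -> bool.

(* basic clopen cylinder determined by a finite binary string s;
   its (coin-flipping / Lebesgue) measure is 2^-(size s) *)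
Definition cyl (s : seq bool) : set cantor :=
  [set x | forall i, (i < size s)%N -> x i = nth false s i].

Definition null (A : set cantor) : Prop :=
  forall k : nat, exists c : nat -> seq bool,
    (A `<=` \bigcup_n cyl (c n))%classic /\
    forall N : nat,
      (\sum_(n < N) ((2%:R : rat) ^+ size (c n))^-1 <= ((2%:R : rat) ^+ k)^-1)%R.

Definition nonempty_null (A : set cantor) : Prop := null A /\ A <> set0.

Definition incomparable_family (F : set (set cantor)) : Prop :=
  (F `<=` nonempty_null)%classic /\
  forall p, nonempty_null p ->
    exists2 q, F q & ~ (p `<=` q)%classic /\ ~ (q `<=` p)%classic.

Definition add_null_family (G : set (set cantor)) : Prop :=
  (G `<=` null)%classic /\ ~ null (\bigcup_(A in G) A)%classic.

Definition min_size (P : set (set cantor) -> Prop) (F : set (set cantor)) : Prop :=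
  P F /\ forall G, P G -> (F #<= G)%card.

From mathcomp Require Import all_boot all_order all_algebra.
From mathcomp Require Import boolp classical_sets cardinality.
From mathcomp Require Import ring lra.
Set Implicit Arguments. Unset Strict Implicit. Unset Printing Implicit Defensive.
Import Order.TTheory GRing.Theory Num.Theory.
Local Open Scope classical_set_scope.
Local Open Scope ring_scope.

(* An incomparable family F has a non-null union: otherwise the union would be
   a nonempty null set, and the member of F incomparable with it would still
   be contained in it.  So every incomparable family witnesses add(null).

   Conversely, let G be a family of null sets of minimal size with non-null
   union.  It has at most continuum size, so some io injects G into 2^omega;
   fix A0 in G.  Code A <> A0 by 0A `|` {1 io(A)} and A0 by {1 io(A0)}, where
   bA prefixes the bit b to every sequence of A.  A nonempty null p containing
   some 1y is incomparable with the code of some A <> A0 with io(A) <> y and A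
   not inside the 0-section of p, as the union of G cannot be covered by three
   null sets; a p inside the 0-half is incomparable with the code of A0.  So an incomparable family of size at most |G| exists.

   Both minima exist since cardinals are well ordered, and the family of all
   singletons witnesses add(null) because 2^omega is compact, hence not null. *)

Definition cyl_measure (s : seq bool) : rat := ((2%:R : rat) ^+ size s)^-1.

Lemma cyl_measure_ge0 s : 0 <= cyl_measure s.
Proof. by rewrite /cyl_measure invr_ge0 exprn_ge0. Qed.

Lemma inv_exp2S n : ((2%:R : rat) ^+ n.+1)^-1 = ((2%:R : rat) ^+ n)^-1 / 2%:R.
Proof. by rewrite exprS invrM ?unitfE ?expf_neq0 // mulrC. Qed.

Lemma inv_exp2_halves n :
  ((2%:R : rat) ^+ n)^-1 = ((2%:R : rat) ^+ n.+1)^-1 + ((2%:R : rat) ^+ n.+1)^-1.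
Proof. by rewrite inv_exp2S; set a := (_ ^-1); field. Qed.

Lemma inv_exp2_le m n : (m <= n)%N -> ((2%:R : rat) ^+ n)^-1 <= ((2%:R : rat) ^+ m)^-1.
Proof. by move=> mn; rewrite lef_pV2 ?posrE ?exprn_gt0 // ler_eXn2l // ltr1n. Qed.

Lemma geometric_sum_inv_exp2 k N :
  \sum_(n < N) ((2%:R : rat) ^+ (n + k).+1)^-1 + ((2%:R : rat) ^+ (N + k))^-1
  = ((2%:R : rat) ^+ k)^-1.
Proof.
elim: N => [|N IH]; first by rewrite big_ord0 add0r.
by rewrite big_ord_recr /= -IH -addrA addSn [in RHS]inv_exp2_halves.
Qed.

Lemma geometric_sum_inv_exp2_le k N :
  \sum_(n < N) ((2%:R : rat) ^+ (n + k).+1)^-1 <= ((2%:R : rat) ^+ k)^-1.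
Proof. by rewrite -(geometric_sum_inv_exp2 k N) lerDl invr_ge0 exprn_ge0. Qed.

Lemma ler_sum_widen (F : nat -> rat) N M : (N <= M)%N -> (forall n, 0 <= F n) ->
  \sum_(n < N) F n <= \sum_(n < M) F n.
Proof.
move=> NM F0; rewrite (big_ord_widen M F NM) big_mkcond /=.
by apply: ler_sum => i _; case: ifP.
Qed.

Lemma big_ord_double_split (F : nat -> rat) M :
  \sum_(n < M.*2) F n = \sum_(m < M) F m.*2 + \sum_(m < M) F m.*2.+1.
Proof.
elim: M => [|M IH]; first by rewrite !big_ord0 addr0.
by rewrite doubleS !big_ord_recr /= IH; ring.
Qed.

Lemma sub_null (A B : set cantor) : A `<=` B -> null B -> null A.
Proof.
by move=> AB nB k; have [c [cB cs]] := nB k; exists c; split => //; apply: subset_trans cB.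
Qed.

Lemma null_set1 (x : cantor) : null [set x].
Proof.
move=> k; exists (fun n => mkseq x (n + k).+1); split.
  by move=> y -> /=; exists 0%N => // i; rewrite size_mkseq => hi; rewrite nth_mkseq.
move=> N; apply: le_trans (geometric_sum_inv_exp2_le k N).
by apply: ler_sum => i _; rewrite size_mkseq.
Qed.

Lemma null_setU (A B : set cantor) : null A -> null B -> null (A `|` B).
Proof.
move=> nA nB k; have [cA [covA sA]] := nA k.+1; have [cB [covB sB]] := nB k.+1.
pose c n := if odd n then cB n./2 else cA n./2.
exists c; split.
  move=> x [/covA|/covB] [m _ hm].
    by exists m.*2 => //; rewrite /c odd_double doubleK.
  by exists m.*2.+1 => //; rewrite /c /= odd_double /= uphalf_double.
move=> N; pose F n := cyl_measure (c n).
apply: le_trans (ler_sum_widen (leq_addr N N) (fun n => cyl_measure_ge0 (c n))) _.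
rewrite addnn (big_ord_double_split F) inv_exp2_halves.
apply: lerD; [apply: le_trans (sA N) | apply: le_trans (sB N)];
  apply: ler_sum => i _; rewrite /F /c /= odd_double ?doubleK ?uphalf_double //.
Qed.

Definition ccons (b : bool) (x : cantor) : cantor :=
  fun i => if i is i'.+1 then x i' else b.

Lemma ccons_inj b b' x y : ccons b x = ccons b' y -> b = b' /\ x = y.
Proof.
move=> e; split; first exact: (congr1 (fun f => f 0%N) e).
by apply: funext => i; exact: (congr1 (fun f => f i.+1) e).
Qed.

Lemma null_ccons_image b A : null A -> null (ccons b @` A).
Proof.
move=> nA k; have [c [cov s]] := nA k.
exists (fun n => b :: c n); split.
  by move=> _ [x /cov [n _ hn] <-]; exists n => // -[|i] //= /hn.
move=> N; apply: le_trans (s N); apply: ler_sum => i _ /=.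
exact: inv_exp2_le.
Qed.

Lemma cyl_measure_behead s : cyl_measure (behead s) <= 2%:R * cyl_measure s.
Proof.
rewrite /cyl_measure; case: s => [|a s] /=; first by rewrite expr0 invr1; lra.
by rewrite inv_exp2S mulrC divfK.
Qed.

Lemma null_ccons_preimage b p : null p -> null (ccons b @^-1` p).
Proof.
move=> np k; have [c [cov s]] := np k.+1.
exists (fun n => behead (c n)); split.
  move=> x /cov [n _ hn]; exists n => // i; rewrite size_behead => hi /=.
  by rewrite nth_behead; apply: (hn i.+1); rewrite -ltn_predRL.
move=> N; apply: (@le_trans _ _ (\sum_(n < N) 2%:R * cyl_measure (c n))).
  by apply: ler_sum => i _; exact: cyl_measure_behead.
rewrite -mulr_sumr; apply: le_trans (ler_wpM2l _ (s N)) _ => //.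
by rewrite inv_exp2S mulrC divfK.
Qed.

Lemma cyl_rcons s b x : cyl (rcons s b) x <-> cyl s x /\ x (size s) = b.
Proof.
split=> [h|[h hb] i].
  split; last by rewrite h ?size_rcons // nth_rcons ltnn eqxx.
  by move=> i hi; rewrite h ?size_rcons 1?ltnW // nth_rcons hi.
rewrite size_rcons ltnS leq_eqVlt => /orP[/eqP ->|hi].
  by rewrite nth_rcons ltnn eqxx.
by rewrite nth_rcons hi h.
Qed.

Lemma cyl_prefix s t x : cyl s x -> cyl t x -> (size s <= size t)%N -> prefix s t.
Proof.
move=> hs ht st; have sz : size (take (size s) t) = size s.
  by rewrite size_take_min (minn_idPl st).
rewrite prefixE; apply/eqP/(@eq_from_nth _ false) => // i; rewrite sz => hi.
by rewrite nth_take // -hs // ht // (leq_trans hi st).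
Qed.

Lemma prefix_rcons_false_true t s :
  prefix (rcons t false) s -> prefix (rcons t true) s -> False.
Proof. by rewrite !prefixE !size_rcons => /eqP->; rewrite eqseq_rcons andbF. Qed.

Lemma cyl_measure_le_sum_prefix s t l : s \in l -> prefix s t ->
  cyl_measure t <= \sum_(u <- l) cyl_measure u.
Proof.
move=> sl /size_prefix st; apply: le_trans (inv_exp2_le st) _.
by rewrite (big_rem s) // lerDl; apply: sumr_ge0 => u _; exact: cyl_measure_ge0.
Qed.

(* The depth bound [d] on the covering cylinders is only the induction parameter. *)
Lemma cyl_measure_le_cover d t l :
  (forall s, s \in l -> size s <= size t + d)%N ->
  (forall x, cyl t x -> exists2 s, s \in l & cyl s x) ->
  cyl_measure t <= \sum_(s <- l) cyl_measure s.
Proof.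
elim: d t l => [|d IH] t l hs hc.
all: have [[s sl st]|nst] := pselect (exists2 s, s \in l & prefix s t);
  first exact: cyl_measure_le_sum_prefix sl st.
all: have longer x s : cyl t x -> s \in l -> cyl s x -> (size t < size s)%N
  by move=> xt sl sx; rewrite ltnNge; apply/negP => ts;
     apply: nst; exists s => //; exact: cyl_prefix sx xt ts.
  have [s sl sx] := hc (nth false t) (fun i _ => erefl).
  by have := longer _ _ (fun i _ => erefl) sl sx; rewrite ltnNge -(addn0 (size t)) hs.
have child b : cyl_measure (rcons t b) <=
    \sum_(s <- l | prefix (rcons t b) s) cyl_measure s.
  rewrite -big_filter; apply: IH.
    by move=> s; rewrite mem_filter size_rcons addSnnS => /andP[_ /hs].
  move=> x /cyl_rcons[xt xb]; have [s sl sx] := hc x xt.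
  have ts := longer x s xt sl sx.
  exists s; rewrite ?mem_filter ?sl ?andbT //.
  by apply: cyl_prefix sx _; [apply/cyl_rcons | rewrite size_rcons].
have -> : cyl_measure t = cyl_measure (rcons t false) + cyl_measure (rcons t true).
  by rewrite /cyl_measure !size_rcons -inv_exp2_halves.
apply: le_trans (lerD (child false) (child true)) _.
rewrite [leRHS](bigID (prefix (rcons t false))) lerD2l big_mkcond [leRHS]big_mkcond.
apply: ler_sum => s _; case: ifP => h1; case: ifP => h0 //=; last exact: cyl_measure_ge0.
by case: (prefix_rcons_false_true (negbFE h0) h1).
Qed.

Definition finitely_covered (c : nat -> seq bool) (s : seq bool) : Prop :=
  exists N, forall x, cyl s x -> exists2 n, (n < N)%N & cyl (c n) x.

Lemma finitely_covered_rcons c s :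
  finitely_covered c (rcons s false) -> finitely_covered c (rcons s true) ->
  finitely_covered c s.
Proof.
move=> [N0 h0] [N1 h1]; exists (maxn N0 N1) => x xs.
have : cyl (rcons s (x (size s))) x by apply/cyl_rcons.
case: (x (size s)) => [/h1|/h0] [n lt_n hc]; exists n => //.
  exact: leq_trans lt_n (leq_maxr _ _).
exact: leq_trans lt_n (leq_maxl _ _).
Qed.

Section Compactness.
Variable c : nat -> seq bool.
Hypothesis cover : setT `<=` \bigcup_n cyl (c n).

(* Koenig's lemma: descend into a child that is not finitely covered. *)
Fixpoint uncovered_branch (d : nat) : seq bool :=
  if d is d'.+1 then
    let s := uncovered_branch d' in rcons s `[< finitely_covered c (rcons s false) >]
  else [::].

Lemma size_uncovered_branch d : size (uncovered_branch d) = d.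
Proof. by elim: d => //= d IH; rewrite size_rcons IH. Qed.

Lemma finitely_covered_nil : finitely_covered c [::].
Proof.
apply: contrapT => nfc_nil.
have nfc d : ~ finitely_covered c (uncovered_branch d).
  elim: d => //= d IH; set s := uncovered_branch d.
  case: (pselect (finitely_covered c (rcons s false))) => [fc_false|nfc_false].
    by rewrite asboolT // => fc_true; exact: IH (finitely_covered_rcons fc_false fc_true).
  by rewrite asboolF.
pose x i := nth false (uncovered_branch i.+1) i.
have x_branch d : cyl (uncovered_branch d) x.
  elim: d => // d IH i; rewrite size_uncovered_branch ltnS leq_eqVlt.
  case/orP=> [/eqP ->|hi] //=.
  by rewrite nth_rcons size_uncovered_branch hi -IH ?size_uncovered_branch.
have [n _ xn] := cover (I : setT x).
apply: (nfc (size (c n))); exists n.+1 => y yb; exists n => // i hi.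
by rewrite yb ?size_uncovered_branch // -(x_branch (size (c n))) ?xn ?size_uncovered_branch.
Qed.

End Compactness.

Lemma not_null_setT : ~ null setT.
Proof.
move=> /(_ 1%N) [c [cover small]].
have [N hN] := finitely_covered_nil cover.
pose l := map c (index_iota 0 N).
have : cyl_measure [::] <= \sum_(s <- l) cyl_measure s.
  apply: (@cyl_measure_le_cover (\max_(n < N) size (c n))).
    move=> s /mapP [n]; rewrite mem_index_iota => /andP[_ hn] ->.
    exact: (@leq_bigmax _ (fun n : 'I_N => size (c n)) (Ordinal hn)).
  move=> x x0; have [n hn hc] := hN x x0.
  by exists (c n) => //; apply: map_f; rewrite mem_index_iota.
rewrite big_map big_mkord.
move/le_trans/(_ (small N)); rewrite /cyl_measure expr0 expr1 invr1.
by rewrite invf_ge1 ?ler1n // ltr0n.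
Qed.

Section CardinalMinimum.
Variables (X : pointedType) (P : set X -> Prop).

Definition separating_selectors (Phi : set (set X -> X)) : Prop :=
  (forall f, Phi f -> forall H, P H -> H (f H)) /\
  (forall H, P H -> forall f g, Phi f -> Phi g -> f H = g H -> f = g).

(* A maximal family of separating selectors cannot miss a point of every
   member of P, since one missed point per member gives a new selector. *)
Lemma exhausting_selectors H1 : P H1 ->
  exists Phi, separating_selectors Phi /\
    exists2 H0, P H0 & forall A, H0 A -> exists2 f, Phi f & f H0 = A.
Proof.
move=> PH1.
have [Phi [[sel sep] Phi_max]] : exists Phi, separating_selectors Phi /\
    forall Psi, Phi `<` Psi -> ~ separating_selectors Psi.
  apply: Zorn_bigcup => F FP Ftot; split.
    by move=> f [Phi FPhi Phif]; exact: (FP _ FPhi).1.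
  move=> H PH f g [Phi1 F1 f1] [Phi2 F2 g2].
  case: (Ftot _ _ F1 F2) => sub.
    exact: (FP _ F2).2 H PH f g (sub _ f1) g2.
  exact: (FP _ F1).2 H PH f g f1 (sub _ g2).
exists Phi; split => //; apply: contrapT => nexh.
have missed H : exists A, P H -> H A /\ forall f, Phi f -> f H <> A.
  case: (pselect (P H)) => PH; last by exists point.
  apply: contrapT => hn; apply: nexh; exists H => // A HA.
  apply: contrapT => nf; apply: hn; exists A => _; split => // f Phif fA.
  by apply: nf; exists f.
have [g hg] := choice missed.
apply: (Phi_max (Phi `|` [set g])).
  split; first by move=> f Phif; left.
  by move=> sub; have [_ /(_ g (sub g (or_intror erefl)))] := hg H1 PH1.
split.
  by move=> f [Phif|->] H PH; [exact: sel f Phif H PH | have [] := hg H PH].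
move=> H PH f f' [Phif|->] [Phif'|->] e.
- exact: sep H PH f f' Phif Phif' e.
- by have [_ /(_ f Phif)] := hg H PH.
- by have [_ /(_ f' Phif')] := hg H PH; rewrite e.
- by [].
Qed.

Lemma exhausted_card_le Phi H0 G : separating_selectors Phi ->
  (forall A, H0 A -> exists2 f, Phi f & f H0 = A) -> P G -> (H0 #<= G)%card.
Proof.
move=> [sel sep] exh PG.
have pick A : exists f, H0 A -> Phi f /\ f H0 = A.
  case: (pselect (H0 A)) => hA; last by exists (fun _ => point).
  by have [f Phif fA] := exh A hA; exists f.
have [s hs] := choice pick.
apply/pcard_leP/injfunPex; exists (fun A => s A G).
  by move=> A /hs[Phis _]; exact: sel _ Phis G PG.
move=> A B /set_mem/hs[PhiA eA] /set_mem/hs[PhiB eB] e.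
by rewrite -eA -eB (sep G PG _ _ PhiA PhiB e).
Qed.

Lemma exists_card_minimum : (exists H, P H) ->
  exists F, P F /\ forall G, P G -> (F #<= G)%card.
Proof.
move=> [H1 /exhausting_selectors [Phi [Phi_sep [H0 PH0 exh]]]].
by exists H0; split => // G; exact: exhausted_card_le Phi_sep exh.
Qed.

End CardinalMinimum.

Lemma incomparable_add_null_family F : incomparable_family F -> add_null_family F.
Proof.
case=> Fsub Finc; split; first by move=> A /Fsub[].
set U := \bigcup_(A in F) A => nullU.
have pt : nonempty_null [set point].
  by split; [exact: null_set1 | move/seteqP => [/(_ point erefl)]].
have [q Fq _] := Finc _ pt.
have neU : U <> set0.
  move=> U0; apply: (Fsub q Fq).2; apply/seteqP; split => // x qx.
  by rewrite -U0; exists q.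
have [q' Fq' [_ not_sub]] := Finc U (conj nullU neU).
by apply: not_sub => x q'x; exists q'.
Qed.

Lemma add_null_family_singletons (U : set cantor) :
  ~ null U -> add_null_family [set [set x] | x in U].
Proof.
move=> nU; split; first by move=> _ [x _ <-]; exact: null_set1.
suff -> : \bigcup_(B in [set [set x] | x in U]) B = U by [].
apply/seteqP; split => [x [_ [y Uy <-] ->] //|x Ux].
by exists [set x] => //; exists x.
Qed.

Section IncomparableCode.
Variables (G : set (set cantor)) (io : set cantor -> cantor) (A0 : set cantor).
Hypotheses (G_add : add_null_family G) (io_inj : {in G &, injective io}) (G_A0 : G A0).

Definition code (A : set cantor) : set cantor :=
  if `[< A = A0 >] then [set ccons true (io A)]
  else ccons false @` A `|` [set ccons true (io A)].

Lemma code_tag A : code A (ccons true (io A)).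
Proof. by rewrite /code; case: asboolP => _; [|right]. Qed.

Lemma nonempty_null_code A : G A -> nonempty_null (code A).
Proof.
move=> GA; split; last by move=> c0; have := code_tag A; rewrite c0.
rewrite /code; case: asboolP => _; first exact: null_set1.
by apply: null_setU (null_set1 _); exact/null_ccons_image/G_add.1.
Qed.

(* Otherwise the union of G would lie in the null set N `|` A0 `|` io^-1(y). *)
Lemma add_null_family_avoid (N : set cantor) y : null N ->
  exists A, [/\ G A, A <> A0, io A <> y & ~ (A `<=` N)].
Proof.
move=> nullN; apply: contrapT => none; apply: G_add.2.
pose Y := \bigcup_(A in [set A | G A /\ io A = y]) A.
have nullY : null Y.
  case: (pselect (exists A1, G A1 /\ io A1 = y)) => [[A1 [GA1 e1]]|noA1].
    apply: sub_null (G_add.1 _ GA1) => x [A [GA eA] Ax].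
    by rewrite -(io_inj (mem_set GA) (mem_set GA1)) ?eA ?e1.
  by apply: sub_null (null_set1 point) => x [A GAy]; case: noA1; exists A.
apply: sub_null (null_setU (null_setU nullN (G_add.1 _ G_A0)) nullY).
move=> x [A GA Ax].
case: (pselect (A = A0)) => [<-|neA0]; first by left; right.
case: (pselect (io A = y)) => [eA|neA]; first by right; exists A.
by left; left; apply: contrapT => Nx; apply: none; exists A; split => // /(_ x Ax).
Qed.

Lemma incomparable_code : incomparable_family (code @` G).
Proof.
split; first by move=> _ [A GA <-]; exact: nonempty_null_code.
move=> p [nullp nep].
case: (pselect (exists y, p (ccons true y))) => [[y py]|no_tag].
  have [A [GA neA0 neA not_sub]] :=
    add_null_family_avoid y (null_ccons_preimage false nullp).
  have codeA : code A = ccons false @` A `|` [set ccons true (io A)].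
    by rewrite /code asboolF.
  exists (code A); first by exists A.
  split.
    move=> /(_ _ py); rewrite codeA => -[[x _ /ccons_inj[]]|/ccons_inj[_ eA]] //.
    by case: neA.
  by move=> sub; apply: not_sub => x Ax; apply: sub; rewrite codeA; left; exists x.
have [x px] : exists x, p x.
  by apply: contrapT => nx; apply: nep; apply/seteqP; split => // z pz; apply: nx; exists z.
have codeA0 : code A0 = [set ccons true (io A0)] by rewrite /code asboolT.
exists (code A0); first by exists A0.
split.
  by move=> /(_ _ px); rewrite codeA0 => ex; apply: no_tag; exists (io A0); rewrite -ex.
by move=> /(_ _ (code_tag A0)) ptag; apply: no_tag; exists (io A0).
Qed.

End IncomparableCode.

Lemma incomparable_family_card_le_add G : min_size add_null_family G ->
  exists F, incomparable_family F /\ (F #<= G)%card.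
Proof.
move=> [G_add G_min]; have [_ nullU] := G_add.
have /pcard_injP[io io_inj] : (G #<= [set: cantor])%card.
  apply: card_le_trans (G_min _ (add_null_family_singletons nullU)) _.
  exact: card_le_trans (card_image_le _ _) (card_leT _).
have [A0 GA0] : exists A0, G A0.
  apply: contrapT => noA; apply: nullU; apply: sub_null (null_set1 point).
  by move=> x [A GA _]; case: noA; exists A.
exists (code io A0 @` G); split; last exact: card_image_le.
exact: incomparable_code G_add io_inj GA0.
Qed.

Theorem mainTheorem10 :
  exists F G : set (set cantor),
    min_size incomparable_family F /\ min_size add_null_family G /\ (F #= G)%card.
Proof.
have [G minG] : exists G, min_size add_null_family G.
  exact/exists_card_minimum/(ex_intro _ _ (add_null_family_singletons not_null_setT)).
have [F [incF FG]] := incomparable_family_card_le_add minG.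
have GF := minG.2 F (incomparable_add_null_family incF).
exists F, G; split; last by split => //; exact: Cantor_Bernstein FG GF.
split => // H incH.
exact: card_le_trans FG (minG.2 H (incomparable_add_null_family incH)).
Qed.
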